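(* Under the standing setup (in either Scenario I or Scenario II), assume $0<h<\frac{1}{d_{\max}}$ and that the expected graph is strongly connected. Then the system $x(t_{k+1})=(I-hL_{\sigma_k})^{\bar k}x(t_k)$ reaches consensus almost surely: for every $x(0)\in\mathbb{R}^n$, $P\{\lim_{k\to\infty}(M(t_k)-m(t_k))=0\}=1$, where $M(t_k)=\max_i x_i(t_k)$ and $m(t_k)=\min_i x_i(t_k)$. The same conclusion holds for the limiting system $x(t_{k+1})=e^{-L_{\sigma_k}\Delta}x(t_k)$.
   Context: Standing setup. $n\ge3$ agents. $G$ is an undirected connected graph on $\{1,\dots,n\}$ with symmetric $0/1$ adjacency matrix $A=[a_{ij}]$ (zero diagonal), degrees $d_i=\sum_j a_{ij}$, $d_{\max}=\max_i d_i$, and Laplacian $L=\mathrm{diag}(d_1,\dots,d_n)-A$, with entries $l_{ij}$. For a (possibly directed) $0/1$ adjacency matrix $B$ ($b_{ij}=1$ meaning agent $i$ receives from agent $j$), its Laplacian is $\mathrm{diag}(B\mathbf{1})-B$. Scenario I (agents 1,2 may fail to receive): $A_1$ is $A$ with row 1 set to zero, $A_2$ is $A$ with row 2 set to zero, $A_3$ is $A$ with rows 1 and 2 set to zero, $A_4=A$. Scenario II (agents 1,2 may fail to send): same with columns instead of rows. $L_i$ is the Laplacian of $A_i$ (so $L_4=L$). Probabilities $p_1=\alpha,p_2=\beta,p_3=\gamma,p_4=\theta\in(0,1)$ with $\alpha+\beta+\gamma+\theta=1$. The expected graph is the directed graph with weighted adjacency matrix $\sum_{i=1}^4 p_iA_i$.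 Sampling period $h>0$, integer $\bar k\ge1$, $\Delta=\bar k h$, $t_k=k\Delta$. $\sigma_0,\sigma_1,\dots$ are i.i.d. random variables in $\{1,2,3,4\}$ with $P(\sigma_k=i)=p_i$ (the graph is held fixed on each interval of length $\Delta$, during which the delta-operator system $\delta x=-L_{\sigma_k}x$ with step $h$ is run $\bar k$ times). The initial state $x(t_0)=x(0)\in\mathbb{R}^n$ is deterministic. $\mathbf{1}$ is the all-ones column vector. *)

(* classical reals. Matrices are functions nat -> nat -> R,
   only entries with indices < n matter; agent i (1-based) is index i-1. *)
From Stdlib Require Import Reals Lra List Relations Factorial.
Import ListNotations.
Open Scope R_scope.

Definition mat := nat -> nat -> R.
Definition vec := nat -> R.

Fixpoint sumR (n : nat) (f : nat -> R) : R :=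
  match n with O => 0 | S m => sumR m f + f m end.

Definition mat_id : mat := fun i j => if Nat.eq_dec i j then 1 else 0.
Definition mat_mul (n : nat) (A B : mat) : mat :=
  fun i j => sumR n (fun k => A i k * B k j).
Fixpoint mat_pow (n : nat) (A : mat) (k : nat) : mat :=
  match k with O => mat_id | S m => mat_mul n A (mat_pow n A m) end.
Definition mat_scale (c : R) (A : mat) : mat := fun i j => c * A i j.
Definition mat_sub (A B : mat) : mat := fun i j => A i j - B i j.
Definition mat_vec (n : nat) (A : mat) (x : vec) : vec :=
  fun i => sumR n (fun k => A i k * x k).

Definition laplacian (n : nat) (B : mat) : mat :=
  fun i j => (if Nat.eq_dec i j then sumR n (fun k => B i k) else 0) - B i j.

Definition degree (n : nat) (A : mat) (i : nat) : R := sumR n (fun k => A i k).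
Definition vmax (n : nat) (x : vec) : R := fold_right Rmax (x 0%nat) (map x (seq 0 n)).
Definition vmin (n : nat) (x : vec) : R := fold_right Rmin (x 0%nat) (map x (seq 0 n)).
Definition dmax (n : nat) (A : mat) : R := vmax n (degree n A).

Definition simple_adj (n : nat) (A : mat) : Prop :=
  (forall i j, (i < n)%nat -> (j < n)%nat -> A i j = 0 \/ A i j = 1) /\
  (forall i j, (i < n)%nat -> (j < n)%nat -> A i j = A j i) /\
  (forall i, (i < n)%nat -> A i i = 0).

(* directed edge j -> i when B i j > 0 (i receives from j) *)
Definition edge (n : nat) (B : mat) : relation nat :=
  fun j i => (i < n)%nat /\ (j < n)%nat /\ 0 < B i j.
Definition strongly_connected (n : nat) (B : mat) : Prop :=
  forall i j, (i < n)%nat -> (j < n)%nat -> clos_refl_trans nat (edge n B) i j.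
Definition connected (n : nat) (A : mat) : Prop := strongly_connected n A.

Inductive scenario := ScenarioI | ScenarioII.
Inductive mode := M1 | M2 | M3 | M4.

Definition zero_row (r : nat) (A : mat) : mat :=
  fun i j => if Nat.eq_dec i r then 0 else A i j.
Definition zero_col (c : nat) (A : mat) : mat :=
  fun i j => if Nat.eq_dec j c then 0 else A i j.

(* A_1..A_4 ; agents 1,2 are indices 0,1 *)
Definition adj_mode (sc : scenario) (A : mat) (s : mode) : mat :=
  let z := match sc with ScenarioI => zero_row | ScenarioII => zero_col end in
  match s with
  | M1 => z 0%nat A
  | M2 => z 1%nat A
  | M3 => z 0%nat (z 1%nat A)
  | M4 => A
  end.

Definition lap_mode (sc : scenario) (n : nat) (A : mat) (s : mode) : mat :=
  laplacian n (adj_mode sc A s).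

Definition prob (a b c t : R) (s : mode) : R :=
  match s with M1 => a | M2 => b | M3 => c | M4 => t end.

Definition expected_adj (sc : scenario) (A : mat) (a b c t : R) : mat :=
  fun i j => a * adj_mode sc A M1 i j + b * adj_mode sc A M2 i j
           + c * adj_mode sc A M3 i j + t * adj_mode sc A M4 i j.

Fixpoint traj (n : nat) (T : mode -> mat) (sigma : nat -> mode) (x0 : vec) (k : nat) : vec :=
  match k with
  | O => x0
  | S m => mat_vec n (T (sigma m)) (traj n T sigma x0 m)
  end.

Definition consensus (n : nat) (T : mode -> mat) (x0 : vec) (sigma : nat -> mode) : Prop :=
  Un_cv (fun k => vmax n (traj n T sigma x0 k) - vmin n (traj n T sigma x0 k)) 0.

(* Probability of the cylinder set {sigma | sigma_0..sigma_{l-1} = w} under the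
   i.i.d. product law with P(sigma_k = s) = p s. *)
Fixpoint word_prob (p : mode -> R) (w : list mode) : R :=
  match w with [] => 1 | s :: w' => p s * word_prob p w' end.
Definition has_prefix (w : list mode) (sigma : nat -> mode) : Prop :=
  forall i, (i < length w)%nat -> nth i w M1 = sigma i.

(* P(E) = 1 for the i.i.d. product measure: the complement of E has outer
   measure 0, i.e. can be covered by countably many cylinders of total
   probability at most eps, for every eps > 0. *)
Definition almost_surely (p : mode -> R) (E : (nat -> mode) -> Prop) : Prop :=
  forall eps, 0 < eps ->
    exists cover : nat -> list mode,
      (forall N, sumR N (fun k => word_prob p (cover k)) <= eps) /\
      (forall sigma, ~ E sigma -> exists k, has_prefix (cover k) sigma).

Definition is_expm (n : nat) (M E : mat) : Prop :=
  forall i j, infinite_sum (fun k => mat_pow n M k i j / INR (fact k)) (E i j).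

(* Every transition matrix T_s (a power of the Euler step I - h L_s, or the exponential of
   -L_s Delta) is row stochastic, so the spread max_i x_i - min_i x_i never increases. The
   matrix T_4 of the full graph A puts weight at least delta > 0 on its diagonal and on every
   edge of A; since A is connected, some power T_4^L has all entries at least delta^L, so a run
   of L consecutive modes 4 shrinks the spread by the factor 1 - delta^L. Cutting time into
   blocks of length L, the sequences in which no block after the J-th is such a run lie in
   cylinder sets of total probability (1 - theta^L)^m for every m; so almost surely infinitely
   many blocks are runs, and the spread tends to 0. For the exponential, nonnegativity comes
   from e^{-L t} = e^{-c t} e^{t (c I - L)} with c >= d_max, where c I - L >= 0. *)

From Coquelicot Require Import Coquelicot.
From Stdlib Require Import Reals Lra Lia List Relations Classical ClassicalEpsilon Factorial.
Import ListNotations.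
Open Scope R_scope.

Lemma sumR_ext n f g : (forall k, (k < n)%nat -> f k = g k) -> sumR n f = sumR n g.
Proof.
  induction n as [|n IH]; intros H; simpl; [reflexivity|].
  rewrite IH by (intros; apply H; lia). rewrite H by lia; reflexivity.
Qed.

Lemma sumR_plus n f g : sumR n (fun k => f k + g k) = sumR n f + sumR n g.
Proof. induction n as [|n IH]; simpl; [lra|]. rewrite IH; lra. Qed.

Lemma sumR_scal n c f : sumR n (fun k => c * f k) = c * sumR n f.
Proof. induction n as [|n IH]; simpl; [lra|]. rewrite IH; lra. Qed.

Lemma sumR_minus n f g : sumR n (fun k => f k - g k) = sumR n f - sumR n g.
Proof. induction n as [|n IH]; simpl; [lra|]. rewrite IH; lra. Qed.

Lemma sumR_const n a : sumR n (fun _ => a) = INR n * a.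
Proof. induction n as [|n IH]; simpl sumR; [simpl; lra|]. rewrite IH, S_INR; ring. Qed.

Lemma sumR_le n f g : (forall k, (k < n)%nat -> f k <= g k) -> sumR n f <= sumR n g.
Proof.
  induction n as [|n IH]; intros H; simpl; [lra|].
  apply Rplus_le_compat; [apply IH; intros; apply H|apply H]; lia.
Qed.

Lemma sumR_ge0 n f : (forall k, (k < n)%nat -> 0 <= f k) -> 0 <= sumR n f.
Proof. intros H. rewrite <- (Rmult_0_r (INR n)), <- sumR_const. apply sumR_le, H. Qed.

Lemma sumR_ge_term n f l : (forall k, (k < n)%nat -> 0 <= f k) -> (l < n)%nat -> f l <= sumR n f.
Proof.
  induction n as [|n IH]; intros H Hl; simpl; [lia|].
  destruct (Nat.eq_dec l n) as [->|Hne].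
  - pose proof (sumR_ge0 n f (fun k Hk => H k ltac:(lia))); lra.
  - pose proof (IH (fun k Hk => H k ltac:(lia)) ltac:(lia)); pose proof (H n ltac:(lia)); lra.
Qed.

Lemma sumR_swap n m f :
  sumR n (fun i => sumR m (fun j => f i j)) = sumR m (fun j => sumR n (fun i => f i j)).
Proof.
  induction n as [|n IH]; simpl.
  - rewrite sumR_const; ring.
  - rewrite IH, <- sumR_plus; reflexivity.
Qed.

Lemma sumR_mat_id_l n i f : (i < n)%nat -> sumR n (fun k => mat_id i k * f k) = f i.
Proof.
  unfold mat_id; induction n as [|n IH]; intros Hi; simpl; [lia|].
  destruct (Nat.eq_dec i n) as [->|Hne].
  - rewrite (sumR_ext n _ (fun _ => 0)), sumR_const; [lra|].
    intros k Hk; destruct (Nat.eq_dec n k); [lia|ring].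
  - rewrite IH by lia; lra.
Qed.

Lemma sumR_mat_id_r n j f : (j < n)%nat -> sumR n (fun k => f k * mat_id k j) = f j.
Proof.
  intros Hj; rewrite <- (sumR_mat_id_l n j f Hj).
  apply sumR_ext; intros k _; unfold mat_id.
  destruct (Nat.eq_dec k j), (Nat.eq_dec j k); subst; try congruence; ring.
Qed.

Lemma sumR_shift n f : sumR (S n) f = f 0%nat + sumR n (fun k => f (S k)).
Proof. induction n as [|n IH]; simpl in *; [lra|]. rewrite IH; lra. Qed.

Lemma sumR_sum_f_R0 n f : sumR (S n) f = sum_f_R0 f n.
Proof. induction n as [|n IH]; simpl in *; [lra|]. rewrite <- IH; reflexivity. Qed.

Lemma fold_right_Rmax_ge l d y : In y l -> y <= fold_right Rmax d l.
Proof.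
  induction l as [|a l IH]; simpl; [tauto|]. intros [<-|H]; [apply Rmax_l|].
  eapply Rle_trans; [apply IH, H|apply Rmax_r].
Qed.

Lemma fold_right_Rmin_le l d y : In y l -> fold_right Rmin d l <= y.
Proof.
  induction l as [|a l IH]; simpl; [tauto|]. intros [<-|H]; [apply Rmin_l|].
  eapply Rle_trans; [apply Rmin_r|apply IH, H].
Qed.

Lemma fold_right_Rmax_le l d b : d <= b -> (forall y, In y l -> y <= b) -> fold_right Rmax d l <= b.
Proof. induction l; simpl; intros; auto. apply Rmax_lub; auto. Qed.

Lemma fold_right_Rmin_ge l d b : b <= d -> (forall y, In y l -> b <= y) -> b <= fold_right Rmin d l.
Proof. induction l; simpl; intros; auto. apply Rmin_glb; auto. Qed.

Lemma fold_right_Rmin_in l d : fold_right Rmin d l = d \/ In (fold_right Rmin d l) l.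
Proof.
  induction l as [|a l IH]; simpl; auto.
  destruct (Rle_dec a (fold_right Rmin d l)).
  - rewrite Rmin_left by lra; auto.
  - rewrite Rmin_right by lra. destruct IH as [->|H]; auto.
Qed.

Section VectorExtrema.
Variables (n : nat) (x : vec).

Lemma vmax_ge i : (i < n)%nat -> x i <= vmax n x.
Proof. intros Hi. apply fold_right_Rmax_ge, in_map, in_seq; lia. Qed.

Lemma vmin_le i : (i < n)%nat -> vmin n x <= x i.
Proof. intros Hi. apply fold_right_Rmin_le, in_map, in_seq; lia. Qed.

Hypothesis n_pos : (0 < n)%nat.

Lemma vmax_le b : (forall i, (i < n)%nat -> x i <= b) -> vmax n x <= b.
Proof.
  intros H. apply fold_right_Rmax_le; [apply H; lia|].
  intros y (i & <- & Hi)%in_map_iff. apply in_seq in Hi. apply H; lia.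
Qed.

Lemma vmin_ge b : (forall i, (i < n)%nat -> b <= x i) -> b <= vmin n x.
Proof.
  intros H. apply fold_right_Rmin_ge; [apply H; lia|].
  intros y (i & <- & Hi)%in_map_iff. apply in_seq in Hi. apply H; lia.
Qed.

Lemma vmin_attained : exists j, (j < n)%nat /\ vmin n x = x j.
Proof.
  unfold vmin. destruct (fold_right_Rmin_in (map x (seq 0 n)) (x 0%nat)) as [H|H].
  - exists 0%nat; auto.
  - apply in_map_iff in H as (j & Hj & Hin). apply in_seq in Hin. exists j; split; [lia|auto].
Qed.

End VectorExtrema.

Definition spread (n : nat) (x : vec) : R := vmax n x - vmin n x.

Lemma spread_ge0 n x : (0 < n)%nat -> 0 <= spread n x.
Proof. intros Hn. pose proof (vmax_ge n x 0 Hn); pose proof (vmin_le n x 0 Hn). unfold spread; lra. Qed.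

Lemma spread_ext n x y : (0 < n)%nat -> (forall i, (i < n)%nat -> x i = y i) -> spread n x = spread n y.
Proof.
  intros Hn H. unfold spread, vmax, vmin.
  rewrite (map_ext_in x y) by (intros i Hi%in_seq; apply H; lia).
  rewrite H by lia; reflexivity.
Qed.

(** * Stochastic matrices and consensus along a trajectory *)

Definition row_stochastic (n : nat) (P : mat) : Prop :=
  (forall i j, (i < n)%nat -> (j < n)%nat -> 0 <= P i j) /\
  (forall i, (i < n)%nat -> sumR n (fun j => P i j) = 1).

Section StochasticAveraging.
Variables (n : nat) (P : mat).
Hypothesis P_stoch : row_stochastic n P.

Lemma row_stochastic_le1 i j : (i < n)%nat -> (j < n)%nat -> P i j <= 1.
Proof.
  intros Hi Hj. destruct P_stoch as [P_ge0 P_sum]. rewrite <- (P_sum i Hi).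
  apply (sumR_ge_term n (fun k => P i k)); auto.
Qed.

Lemma mat_vec_le_sub y b i l : (forall k, (k < n)%nat -> y k <= b) ->
  (i < n)%nat -> (l < n)%nat -> mat_vec n P y i <= b - P i l * (b - y l).
Proof.
  intros Hy Hi Hl. destruct P_stoch as [P_ge0 P_sum]. unfold mat_vec.
  rewrite (sumR_ext n _ (fun k => b * P i k - P i k * (b - y k))) by (intros; ring).
  rewrite sumR_minus, sumR_scal, P_sum by exact Hi.
  assert (P i l * (b - y l) <= sumR n (fun k => P i k * (b - y k))).
  { apply (sumR_ge_term n (fun k => P i k * (b - y k))); auto.
    intros k Hk. apply Rmult_le_pos; [auto|specialize (Hy k Hk); lra]. }
  lra.
Qed.

Lemma mat_vec_le y b i : (forall k, (k < n)%nat -> y k <= b) -> (i < n)%nat -> mat_vec n P y i <= b.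
Proof.
  intros Hy Hi. pose proof (mat_vec_le_sub y b i i Hy Hi Hi).
  assert (0 <= P i i * (b - y i)).
  { apply Rmult_le_pos; [apply (proj1 P_stoch); exact Hi|specialize (Hy i Hi); lra]. }
  lra.
Qed.

Lemma mat_vec_ge y b i : (forall k, (k < n)%nat -> b <= y k) -> (i < n)%nat -> b <= mat_vec n P y i.
Proof.
  intros Hy Hi. destruct P_stoch as [P_ge0 P_sum]. unfold mat_vec.
  rewrite (sumR_ext n _ (fun k => b * P i k + P i k * (y k - b))) by (intros; ring).
  rewrite sumR_plus, sumR_scal, P_sum by exact Hi.
  assert (0 <= sumR n (fun k => P i k * (y k - b))).
  { apply sumR_ge0. intros k Hk. apply Rmult_le_pos; [auto|specialize (Hy k Hk); lra]. }
  lra.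
Qed.

Hypothesis n_pos : (0 < n)%nat.

Lemma spread_mat_vec_le x : spread n (mat_vec n P x) <= spread n x.
Proof.
  assert (vmax n (mat_vec n P x) <= vmax n x).
  { apply vmax_le; auto. intros i Hi. apply mat_vec_le; auto. intros; apply vmax_ge; auto. }
  assert (vmin n x <= vmin n (mat_vec n P x)).
  { apply vmin_ge; auto. intros i Hi. apply mat_vec_ge; auto. intros; apply vmin_le; auto. }
  unfold spread; lra.
Qed.

(* Every row puts weight at least [eta] on a minimiser of [x]. *)
Lemma spread_mat_vec_contract eta x : (forall i j, (i < n)%nat -> (j < n)%nat -> eta <= P i j) ->
  spread n (mat_vec n P x) <= (1 - eta) * spread n x.
Proof.
  intros P_ge. destruct (vmin_attained n x n_pos) as (l & Hl & Hmin).
  assert (vmax n (mat_vec n P x) <= vmax n x - eta * (vmax n x - vmin n x)).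
  { apply vmax_le; auto. intros i Hi.
    eapply Rle_trans; [apply (mat_vec_le_sub x (vmax n x) i l); auto; intros; apply vmax_ge; auto|].
    rewrite Hmin. pose proof (vmax_ge n x l Hl).
    apply Rplus_le_compat_l, Ropp_le_contravar, Rmult_le_compat_r; auto; lra. }
  assert (vmin n x <= vmin n (mat_vec n P x)).
  { apply vmin_ge; auto. intros i Hi. apply mat_vec_ge; auto. intros; apply vmin_le; auto. }
  unfold spread; lra.
Qed.

End StochasticAveraging.

Lemma mat_mul_id_r n M i j : (j < n)%nat -> mat_mul n M mat_id i j = M i j.
Proof. intros Hj. apply (sumR_mat_id_r n j (fun k => M i k) Hj). Qed.

Lemma mat_vec_mat_mul n P Q x i : mat_vec n (mat_mul n P Q) x i = mat_vec n P (mat_vec n Q x) i.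
Proof.
  unfold mat_vec, mat_mul.
  rewrite (sumR_ext n _ (fun k => sumR n (fun l => P i l * Q l k * x k))).
  2: { intros k _. rewrite Rmult_comm, <- sumR_scal. apply sumR_ext; intros; ring. }
  rewrite sumR_swap. apply sumR_ext; intros l _.
  rewrite <- sumR_scal. apply sumR_ext; intros; ring.
Qed.

Lemma mat_pow_ext n M M' k : (forall i j, M i j = M' i j) ->
  forall i j, mat_pow n M k i j = mat_pow n M' k i j.
Proof.
  intros H. induction k as [|k IH]; intros i j; simpl; [reflexivity|].
  unfold mat_mul. apply sumR_ext; intros l _. rewrite H, IH; reflexivity.
Qed.

Lemma mat_pow_ge0 n P k : (forall i j, (i < n)%nat -> (j < n)%nat -> 0 <= P i j) ->
  forall i j, (i < n)%nat -> (j < n)%nat -> 0 <= mat_pow n P k i j.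
Proof.
  intros P_ge0. induction k as [|k IH]; intros i j Hi Hj; simpl.
  - unfold mat_id; destruct Nat.eq_dec; lra.
  - apply sumR_ge0; intros l Hl. apply Rmult_le_pos; auto.
Qed.

Lemma mat_pow_row_sum n M rho k : (forall i, (i < n)%nat -> sumR n (fun j => M i j) = rho) ->
  forall i, (i < n)%nat -> sumR n (fun j => mat_pow n M k i j) = rho ^ k.
Proof.
  intros HM. induction k as [|k IH]; intros i Hi; simpl.
  - rewrite <- (sumR_mat_id_l n i (fun _ => 1) Hi). apply sumR_ext; intros; ring.
  - unfold mat_mul. rewrite sumR_swap.
    rewrite (sumR_ext n _ (fun l => rho ^ k * M i l)).
    + rewrite sumR_scal, HM by exact Hi. ring.
    + intros l Hl. rewrite sumR_scal, IH by exact Hl. ring.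
Qed.

Lemma row_stochastic_mat_pow n P k : row_stochastic n P -> row_stochastic n (mat_pow n P k).
Proof.
  intros [P_ge0 P_sum]. split.
  - apply mat_pow_ge0, P_ge0.
  - intros i Hi. rewrite (mat_pow_row_sum n P 1) by assumption. apply pow1.
Qed.

Fixpoint reach_within (R : relation nat) (r : nat) (j i : nat) : Prop :=
  match r with
  | O => i = j
  | S r' => reach_within R r' j i \/ exists l, reach_within R r' j l /\ R l i
  end.

Lemma reach_within_le R r r' j i : (r <= r')%nat -> reach_within R r j i -> reach_within R r' j i.
Proof. induction 1; simpl; auto. Qed.

Lemma reach_within_of_clos_refl_trans R j i :
  clos_refl_trans nat R j i -> exists r, reach_within R r j i.
Proof.
  intros H%clos_rt_rtn1_iff. induction H as [|l i Hli _ [r Hr]].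
  - exists 0%nat; reflexivity.
  - exists (S r); right; exists l; auto.
Qed.

Lemma exists_uniform_index (Q : nat -> nat -> Prop) :
  (forall r r' i, (r <= r')%nat -> Q r i -> Q r' i) ->
  forall m, (forall i, (i < m)%nat -> exists r, Q r i) -> exists r, forall i, (i < m)%nat -> Q r i.
Proof.
  intros Q_mono m. induction m as [|m IH]; intros H.
  - exists 0%nat; intros; lia.
  - destruct IH as [r1 H1]; [intros; apply H; lia|].
    destruct (H m ltac:(lia)) as [r2 H2]. exists (r1 + r2)%nat. intros i Hi.
    destruct (Nat.eq_dec i m) as [->|Hne]; [apply (Q_mono r2)|apply (Q_mono r1)];
      [lia|exact H2|lia|apply H1; lia].
Qed.

Lemma strongly_connected_reach_within n B : strongly_connected n B ->
  exists L, (1 <= L)%nat /\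
    forall j i, (j < n)%nat -> (i < n)%nat -> reach_within (edge n B) L j i.
Proof.
  intros HB.
  destruct (exists_uniform_index (fun r j => forall i, (i < n)%nat -> reach_within (edge n B) r j i))
    with (m := n) as [L HL].
  - intros r r' j Hr H i Hi. apply (reach_within_le _ r); auto.
  - intros j Hj. apply (exists_uniform_index (fun r i => reach_within (edge n B) r j i)).
    + intros r r' i Hr. apply reach_within_le, Hr.
    + intros i Hi. apply reach_within_of_clos_refl_trans, HB; auto.
  - exists (S L). split; [lia|]. intros j i Hj Hi. apply (reach_within_le _ L); auto.
Qed.

(* Walks shorter than [r] are padded with self-loops, hence the diagonal bound. *)
Lemma mat_pow_ge_reach_within n A P delta :
  (forall i j, (i < n)%nat -> (j < n)%nat -> 0 <= P i j) -> 0 <= delta ->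
  (forall i, (i < n)%nat -> delta <= P i i) ->
  (forall i l, edge n A l i -> delta <= P i l) ->
  forall r j i, (j < n)%nat -> (i < n)%nat -> reach_within (edge n A) r j i ->
  delta ^ r <= mat_pow n P r i j.
Proof.
  intros P_ge0 delta_ge0 P_diag P_edge r j. induction r as [|r IH]; intros i Hj Hi Hreach.
  - simpl in Hreach; subst i. simpl. unfold mat_id. destruct Nat.eq_dec; [lra|congruence].
  - assert (term : forall l, (l < n)%nat -> delta <= P i l -> delta ^ r <= mat_pow n P r l j ->
        delta ^ S r <= mat_pow n P (S r) i j).
    { intros l Hl HPil Hpow. simpl. unfold mat_mul.
      eapply Rle_trans; [|apply (sumR_ge_term n (fun k => P i k * mat_pow n P r k j) l)]; auto.
      - apply Rmult_le_compat; auto. apply pow_le; auto.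
      - intros k Hk. apply Rmult_le_pos; auto. apply mat_pow_ge0; auto. }
    destruct Hreach as [Hreach|(l & Hreach & Hedge)].
    + apply (term i); auto.
    + apply (term l); [apply Hedge|apply P_edge, Hedge|apply IH; auto; apply Hedge].
Qed.

Lemma Un_cv_0_of_geometric_decay (u : nat -> R) c : 0 <= c < 1 ->
  (forall k, 0 <= u k) -> (forall k k', (k <= k')%nat -> u k' <= u k) ->
  (forall r, exists K, u K <= c ^ r * u 0%nat) -> Un_cv u 0.
Proof.
  intros Hc u_ge0 u_mono Hdecay eps Heps.
  destruct (pow_lt_1_zero c ltac:(rewrite Rabs_pos_eq; lra) (eps / (u 0%nat + 1))) as [N HN].
  { apply Rdiv_lt_0_compat; [|pose proof (u_ge0 0%nat)]; lra. }
  destruct (Hdecay N) as [K HK]. exists K. intros k Hk.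
  unfold R_dist. rewrite Rminus_0_r, Rabs_pos_eq by apply u_ge0.
  specialize (HN N (le_n N)). rewrite Rabs_pos_eq in HN by (apply pow_le; lra).
  pose proof (u_mono K k Hk). pose proof (u_ge0 0%nat).
  assert (c ^ N * u 0%nat <= eps / (u 0%nat + 1) * u 0%nat) by (apply Rmult_le_compat_r; lra).
  assert (eps / (u 0%nat + 1) * u 0%nat < eps).
  { apply (Rmult_lt_reg_r (u 0%nat + 1)); [lra|]. field_simplify; nra. }
  lra.
Qed.

Definition constant_block (s0 : mode) (L : nat) (sigma : nat -> mode) (j : nat) : Prop :=
  forall t, (t < L)%nat -> sigma (j * L + t)%nat = s0.

Section Trajectories.
Variables (n : nat) (T : mode -> mat) (sigma : nat -> mode) (x0 : vec).

Let x k := traj n T sigma x0 k.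

Lemma traj_constant_run a L s0 : (forall t, (t < L)%nat -> sigma (a + t)%nat = s0) ->
  forall i, (i < n)%nat -> x (a + L)%nat i = mat_vec n (mat_pow n (T s0) L) (x a) i.
Proof.
  induction L as [|L IH]; intros Hrun i Hi.
  - rewrite Nat.add_0_r. symmetry. apply (sumR_mat_id_l n i (x a) Hi).
  - rewrite Nat.add_succ_r. unfold x at 1; cbn [traj]; fold (x (a + L)%nat).
    rewrite Hrun by lia. cbn [mat_pow]. rewrite mat_vec_mat_mul.
    unfold mat_vec at 1 3. apply sumR_ext; intros k Hk.
    rewrite IH by (auto; intros; apply Hrun; lia). reflexivity.
Qed.

Hypothesis n_pos : (0 < n)%nat.
Hypothesis T_stoch : forall s, row_stochastic n (T s).

Lemma spread_traj_le k k' : (k <= k')%nat -> spread n (x k') <= spread n (x k).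
Proof.
  induction 1 as [|k' _ IH]; [lra|].
  eapply Rle_trans; [apply spread_mat_vec_le; auto|exact IH].
Qed.

Lemma spread_traj_block s0 L eta j :
  (forall i l, (i < n)%nat -> (l < n)%nat -> eta <= mat_pow n (T s0) L i l) ->
  constant_block s0 L sigma j -> spread n (x (j * L + L)%nat) <= (1 - eta) * spread n (x (j * L)%nat).
Proof.
  intros Hpow Hblock.
  rewrite (spread_ext n _ (mat_vec n (mat_pow n (T s0) L) (x (j * L)%nat))) by
    (auto; apply traj_constant_run; exact Hblock).
  apply spread_mat_vec_contract; auto. apply row_stochastic_mat_pow, T_stoch.
Qed.

Lemma consensus_of_recurrent_blocks s0 L eta : (1 <= L)%nat -> 0 < eta ->
  (forall i l, (i < n)%nat -> (l < n)%nat -> eta <= mat_pow n (T s0) L i l) ->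
  (forall J, exists j, (J <= j)%nat /\ constant_block s0 L sigma j) ->
  consensus n T x0 sigma.
Proof.
  intros L_pos eta_pos Hpow Hrec.
  assert (eta_le1 : eta <= 1).
  { eapply Rle_trans; [apply (Hpow 0%nat 0%nat); auto|].
    apply (row_stochastic_le1 n); auto. apply row_stochastic_mat_pow, T_stoch. }
  assert (Hdecay : forall r, exists K, spread n (x K) <= (1 - eta) ^ r * spread n (x 0%nat)).
  { induction r as [|r [K HK]]; [exists 0%nat; simpl; lra|].
    destruct (Hrec K) as (j & HjK & Hj). exists (j * L + L)%nat.
    pose proof (spread_traj_block s0 L eta j Hpow Hj).
    assert (spread n (x (j * L)%nat) <= spread n (x K)) by (apply spread_traj_le; nia).
    simpl. rewrite Rmult_assoc.
    apply (Rle_trans _ ((1 - eta) * spread n (x (j * L)%nat))); auto.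
    apply Rmult_le_compat_l; lra. }
  apply (Un_cv_0_of_geometric_decay (fun k => spread n (x k)) (1 - eta)); auto; [lra| |].
  - intros k. apply spread_ge0, n_pos.
  - intros k k'. apply spread_traj_le.
Qed.

End Trajectories.

(** * Cylinder sets of the i.i.d. mode sequence *)

Section CylinderCovers.
Variable p : mode -> R.
Hypothesis p_ge0 : forall s, 0 <= p s.
Hypothesis p_sum : p M1 + p M2 + p M3 + p M4 = 1.

Definition mass (ws : list (list mode)) : R :=
  fold_right (fun w acc => word_prob p w + acc) 0 ws.

Definition words_app (us vs : list (list mode)) : list (list mode) :=
  flat_map (fun u => map (app u) vs) us.

Lemma word_prob_app u v : word_prob p (u ++ v) = word_prob p u * word_prob p v.
Proof. induction u as [|s u IH]; simpl; [lra|]. rewrite IH; ring. Qed.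

Lemma word_prob_ge0 w : 0 <= word_prob p w.
Proof. induction w; simpl; [lra|]. apply Rmult_le_pos; auto. Qed.

Lemma mass_ge0 ws : 0 <= mass ws.
Proof. induction ws as [|w ws IH]; simpl; [lra|]. pose proof (word_prob_ge0 w); lra. Qed.

Lemma mass_app us vs : mass (us ++ vs) = mass us + mass vs.
Proof. induction us as [|u us IH]; simpl; [lra|]. rewrite IH; ring. Qed.

Lemma mass_map_app u vs : mass (map (app u) vs) = word_prob p u * mass vs.
Proof. induction vs as [|v vs IH]; simpl; [ring|]. rewrite IH, word_prob_app; ring. Qed.

Lemma mass_words_app us vs : mass (words_app us vs) = mass us * mass vs.
Proof.
  induction us as [|u us IH]; simpl; [ring|]. rewrite mass_app, IH, mass_map_app; ring.
Qed.

Lemma in_words_app u v us vs : In u us -> In v vs -> In (u ++ v) (words_app us vs).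
Proof. intros Hu Hv. apply in_flat_map. exists u. split; [exact Hu|apply in_map, Hv]. Qed.

Fixpoint all_words (l : nat) : list (list mode) :=
  match l with
  | O => [[]]
  | S l' => words_app [[M1]; [M2]; [M3]; [M4]] (all_words l')
  end.

Lemma mass_all_words l : mass (all_words l) = 1.
Proof. induction l as [|l IH]; cbn [all_words]; [simpl; lra|]. rewrite mass_words_app, IH. simpl; lra. Qed.

Definition other_modes (s0 : mode) : list mode :=
  match s0 with
  | M1 => [M2; M3; M4] | M2 => [M1; M3; M4] | M3 => [M1; M2; M4] | M4 => [M1; M2; M3]
  end.

Lemma in_other_modes s s0 : s <> s0 -> In s (other_modes s0).
Proof. destruct s, s0; simpl; tauto. Qed.

Lemma mass_other_modes s0 : mass (map (fun s => [s]) (other_modes s0)) = 1 - p s0.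
Proof. destruct s0; simpl; lra. Qed.

(* Words of length [l] that are not the constant word [s0 ... s0]. *)
Fixpoint words_missing (s0 : mode) (l : nat) : list (list mode) :=
  match l with
  | O => []
  | S l' => words_app (map (fun s => [s]) (other_modes s0)) (all_words l')
            ++ words_app [[s0]] (words_missing s0 l')
  end.

Lemma mass_words_missing s0 l : mass (words_missing s0 l) = 1 - p s0 ^ l.
Proof.
  induction l as [|l IH]; cbn [words_missing]; [simpl; lra|].
  rewrite mass_app, !mass_words_app, IH, mass_all_words, mass_other_modes. simpl; ring.
Qed.

Fixpoint blocks_missing (s0 : mode) (L m : nat) : list (list mode) :=
  match m with
  | O => [[]]
  | S m' => words_app (words_missing s0 L) (blocks_missing s0 L m')
  end.

Lemma mass_blocks_missing s0 L m : mass (blocks_missing s0 L m) = (1 - p s0 ^ L) ^ m.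
Proof.
  induction m as [|m IH]; cbn [blocks_missing]; [simpl; lra|].
  rewrite mass_words_app, IH, mass_words_missing; simpl; ring.
Qed.

Definition window (sigma : nat -> mode) (a l : nat) : list mode := map sigma (seq a l).

Lemma window_app sigma a l1 l2 : window sigma a (l1 + l2) = window sigma a l1 ++ window sigma (a + l1) l2.
Proof. unfold window. rewrite seq_app, map_app; reflexivity. Qed.

Lemma window_S sigma a l : window sigma a (S l) = [sigma a] ++ window sigma (S a) l.
Proof. reflexivity. Qed.

Lemma window_in_all_words sigma a l : In (window sigma a l) (all_words l).
Proof.
  revert a; induction l as [|l IH]; intros a; [simpl; auto|].
  cbn [all_words]. rewrite window_S. apply in_words_app; [destruct (sigma a); simpl; tauto|apply IH].
Qed.

Lemma window_in_words_missing sigma s0 a l :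
  (exists t, (t < l)%nat /\ sigma (a + t)%nat <> s0) -> In (window sigma a l) (words_missing s0 l).
Proof.
  revert a; induction l as [|l IH]; intros a (t & Ht & Hs); [lia|].
  cbn [words_missing]. rewrite window_S. apply in_or_app. destruct (classic (sigma a = s0)) as [Ha|Ha].
  - right. rewrite Ha. apply (in_words_app [s0]); [simpl; auto|]. apply IH.
    destruct t as [|t]; [rewrite Nat.add_0_r in Hs; congruence|].
    exists t; split; [lia|]. replace (S a + t)%nat with (a + S t)%nat by lia; exact Hs.
  - left. apply (in_words_app [sigma a]); [|apply window_in_all_words].
    apply (in_map (fun s => [s])), in_other_modes, Ha.
Qed.

Lemma window_in_blocks_missing sigma s0 L J m :
  (forall j, (J <= j)%nat -> ~ constant_block s0 L sigma j) ->
  In (window sigma (J * L) (m * L)) (blocks_missing s0 L m).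
Proof.
  revert J; induction m as [|m IH]; intros J H; [simpl; auto|].
  cbn [blocks_missing]. replace (S m * L)%nat with (L + m * L)%nat by lia.
  rewrite window_app. apply in_words_app.
  - apply window_in_words_missing. specialize (H J (le_n J)).
    apply not_all_ex_not in H as [t Ht]. apply imply_to_and in Ht. exists t; exact Ht.
  - replace (J * L + L)%nat with (S J * L)%nat by lia. apply IH. intros j Hj; apply H; lia.
Qed.

Lemma window_has_prefix sigma l : has_prefix (window sigma 0 l) sigma.
Proof.
  intros i Hi. unfold window in *. rewrite length_map, length_seq in Hi.
  rewrite (nth_indep _ _ (sigma 0%nat)) by (rewrite length_map, length_seq; exact Hi).
  rewrite map_nth, seq_nth by exact Hi; reflexivity.
Qed.

Lemma finite_cover_no_late_block s0 L J eps : (1 <= L)%nat -> 0 < p s0 -> 0 < eps ->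
  exists C, C <> [] /\ mass C <= eps /\
    forall sigma, (forall j, (J <= j)%nat -> ~ constant_block s0 L sigma j) ->
      exists w, In w C /\ has_prefix w sigma.
Proof.
  intros L_pos p_pos eps_pos.
  set (q := p s0 ^ L).
  assert (q_pos : 0 < q) by (apply pow_lt; exact p_pos).
  assert (q_le1 : 0 <= 1 - q) by (unfold q; rewrite <- mass_words_missing; apply mass_ge0).
  destruct (pow_lt_1_zero (1 - q) ltac:(rewrite Rabs_pos_eq; lra) eps eps_pos) as [m Hm].
  specialize (Hm m (le_n m)). rewrite Rabs_pos_eq in Hm by (apply pow_le; exact q_le1).
  set (C := words_app (all_words (J * L)) (blocks_missing s0 L m)).
  assert (HC : forall sigma, (forall j, (J <= j)%nat -> ~ constant_block s0 L sigma j) ->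
      In (window sigma 0 (J * L + m * L)) C).
  { intros sigma H. rewrite window_app.
    apply in_words_app; [apply window_in_all_words|apply window_in_blocks_missing, H]. }
  exists C; split; [|split].
  - set (s1 := hd s0 (other_modes s0)).
    assert (Hs1 : s1 <> s0) by (unfold s1; destruct s0; discriminate).
    intros E. apply (in_nil (a := window (fun _ => s1) 0 (J * L + m * L))). rewrite <- E.
    apply HC. intros j _ Hblock. exact (Hs1 (Hblock 0%nat L_pos)).
  - unfold C. rewrite mass_words_app, mass_all_words, mass_blocks_missing. fold q. lra.
  - intros sigma H. exists (window sigma 0 (J * L + m * L)).
    split; [apply HC, H|apply window_has_prefix].
Qed.

Lemma sumR_nth_le_mass ws N : (N <= length ws)%nat ->
  sumR N (fun k => word_prob p (nth k ws [])) <= mass ws.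
Proof.
  revert N; induction ws as [|w ws IH]; intros N HN; simpl in HN.
  - replace N with 0%nat by lia. simpl; lra.
  - destruct N as [|N]; [simpl; pose proof (word_prob_ge0 w); pose proof (mass_ge0 ws); lra|].
    rewrite sumR_shift. specialize (IH N ltac:(lia)). simpl; lra.
Qed.

Lemma cover_of_finite_covers (C : nat -> list (list mode)) eps :
  (forall J, C J <> []) -> (forall J, mass (C J) <= eps / 2 ^ S J) ->
  exists cover : nat -> list mode,
    (forall N, sumR N (fun k => word_prob p (cover k)) <= eps) /\
    (forall J w, In w (C J) -> exists k, cover k = w).
Proof.
  intros C_ne C_mass.
  assert (eps_ge0 : 0 <= eps).
  { pose proof (mass_ge0 (C 0%nat)); pose proof (C_mass 0%nat). simpl in *; lra. }
  set (F K := flat_map C (seq 0 (S K))).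
  assert (F_S : forall K, F (S K) = F K ++ C (S K)).
  { intros K. unfold F. rewrite seq_S, flat_map_app. simpl. rewrite app_nil_r; reflexivity. }
  assert (F_ext : forall K d, exists tl, F (K + d)%nat = F K ++ tl).
  { intros K d. induction d as [|d [tl IH]]; [exists []; rewrite Nat.add_0_r, app_nil_r; reflexivity|].
    exists (tl ++ C (S (K + d))). rewrite Nat.add_succ_r, F_S, IH, app_assoc; reflexivity. }
  assert (F_len : forall K, (S K <= length (F K))%nat).
  { assert (C_len : forall J, (1 <= length (C J))%nat).
    { intros J. destruct (C J) eqn:E; [contradiction (C_ne J E)|simpl; lia]. }
    induction K as [|K IH].
    - unfold F. simpl. rewrite app_nil_r. apply C_len.
    - rewrite F_S, length_app. pose proof (C_len (S K)). lia. }
  assert (F_mass : forall K, mass (F K) <= eps - eps / 2 ^ S K).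
  { induction K as [|K IH].
    - unfold F. simpl flat_map. rewrite app_nil_r. pose proof (C_mass 0%nat). simpl in *. lra.
    - rewrite F_S, mass_app. pose proof (C_mass (S K)).
      replace (eps / 2 ^ S (S K)) with (eps / 2 ^ S K / 2) in * by (simpl; field; apply pow_nonzero; lra).
      lra. }
  assert (F_nth : forall k K K', (k < length (F K))%nat -> (K <= K')%nat ->
      nth k (F K') [] = nth k (F K) []).
  { intros k K K' Hk HK. destruct (F_ext K (K' - K)%nat) as [tl E].
    replace (K + (K' - K))%nat with K' in E by lia. rewrite E, app_nth1 by exact Hk; reflexivity. }
  exists (fun k => nth k (F k) []). split.
  - intros N.
    rewrite (sumR_ext N _ (fun k => word_prob p (nth k (F N) []))).
    2: { intros k Hk. rewrite (F_nth k k N); [reflexivity| |lia]. pose proof (F_len k); lia. }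
    eapply Rle_trans; [apply sumR_nth_le_mass; pose proof (F_len N); lia|].
    pose proof (F_mass N). assert (0 <= eps / 2 ^ S N) by (apply Rdiv_le_0_compat; [lra|apply pow_lt; lra]).
    lra.
  - intros J w Hw.
    assert (HwF : In w (F J)) by (apply in_flat_map; exists J; split; [apply in_seq; lia|exact Hw]).
    apply In_nth with (d := []) in HwF as (k & Hk & Hkw). exists k.
    rewrite <- (F_nth k k (k + J)%nat), (F_nth k J (k + J)%nat); auto; try lia.
Qed.

Lemma almost_surely_mono (E E' : (nat -> mode) -> Prop) :
  almost_surely p E -> (forall sigma, E sigma -> E' sigma) -> almost_surely p E'.
Proof.
  intros HE HEE' eps eps_pos. destruct (HE eps eps_pos) as (cover & Hsum & Hcov).
  exists cover. split; [exact Hsum|]. intros sigma Hnot. apply Hcov. intros H; apply Hnot, HEE', H.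
Qed.

Lemma almost_surely_recurrent_blocks s0 L : (1 <= L)%nat -> 0 < p s0 ->
  almost_surely p (fun sigma => forall J, exists j, (J <= j)%nat /\ constant_block s0 L sigma j).
Proof.
  intros L_pos p_pos eps eps_pos.
  assert (Hfin : forall J, exists C, C <> [] /\ mass C <= eps / 2 ^ S J /\
      forall sigma, (forall j, (J <= j)%nat -> ~ constant_block s0 L sigma j) ->
        exists w, In w C /\ has_prefix w sigma).
  { intros J. apply finite_cover_no_late_block; auto.
    apply Rdiv_lt_0_compat; [exact eps_pos|apply pow_lt; lra]. }
  set (C J := proj1_sig (constructive_indefinite_description _ (Hfin J))).
  assert (HC := fun J => proj2_sig (constructive_indefinite_description _ (Hfin J))).
  fold C in HC.
  destruct (cover_of_finite_covers C eps) as (cover & Hsum & Hcov); [apply HC|apply HC|].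
  exists cover. split; [exact Hsum|]. intros sigma Hnot.
  assert (HJ : exists J, forall j, (J <= j)%nat -> ~ constant_block s0 L sigma j).
  { apply not_all_ex_not in Hnot as [J HJ]. exists J. intros j Hj Hblock. apply HJ. exists j; auto. }
  destruct HJ as [J HJ]. destruct (proj2 (proj2 (HC J)) sigma HJ) as (w & Hw & Hprefix).
  destruct (Hcov J w Hw) as [k Hk]. exists k. rewrite Hk. exact Hprefix.
Qed.

End CylinderCovers.

Lemma consensus_almost_surely n A T p s0 delta x0 :
  (0 < n)%nat -> connected n A -> (forall s, row_stochastic n (T s)) -> 0 < delta ->
  (forall i, (i < n)%nat -> delta <= T s0 i i) -> (forall i l, edge n A l i -> delta <= T s0 i l) ->
  (forall s, 0 <= p s) -> p M1 + p M2 + p M3 + p M4 = 1 -> 0 < p s0 ->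
  almost_surely p (consensus n T x0).
Proof.
  intros n_pos A_conn T_stoch delta_pos T_diag T_edge p_ge0 p_sum p_pos.
  destruct (strongly_connected_reach_within n A A_conn) as (L & L_pos & HL).
  apply (almost_surely_mono p
           (fun sigma => forall J, exists j, (J <= j)%nat /\ constant_block s0 L sigma j)).
  - apply almost_surely_recurrent_blocks; auto.
  - intros sigma Hrec.
    apply (consensus_of_recurrent_blocks n T sigma x0 n_pos T_stoch s0 L (delta ^ L)); auto.
    + apply pow_lt, delta_pos.
    + intros i l Hi Hl. apply (mat_pow_ge_reach_within n A); auto; [apply T_stoch|lra].
Qed.

Section Laplacian.
Variables (n : nat) (B : mat).
Hypothesis B_diag : forall i, (i < n)%nat -> B i i = 0.

Lemma laplacian_diag i : (i < n)%nat -> laplacian n B i i = degree n B i.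
Proof.
  intros Hi. unfold laplacian, degree. destruct Nat.eq_dec; [|congruence].
  rewrite B_diag by exact Hi. ring.
Qed.

Lemma laplacian_offdiag i j : i <> j -> laplacian n B i j = - B i j.
Proof. intros Hij. unfold laplacian. destruct Nat.eq_dec; [congruence|ring]. Qed.

Lemma laplacian_row_sum i : (i < n)%nat -> sumR n (fun j => laplacian n B i j) = 0.
Proof.
  intros Hi. unfold laplacian. rewrite sumR_minus.
  rewrite (sumR_ext n _ (fun j => mat_id i j * sumR n (fun k => B i k)))
    by (intros j _; unfold mat_id; destruct Nat.eq_dec; ring).
  rewrite (sumR_mat_id_l n i (fun _ => sumR n (fun k => B i k)) Hi).
  apply Rminus_diag_eq; reflexivity.
Qed.

End Laplacian.

(** * Exponentials of shifted nonnegative matrices *)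

(* Unlike Stdlib's [C], [binomR k q] vanishes for [q > k]; the Pascal recursion relies on this. *)
Fixpoint binomR (k q : nat) : R :=
  match k, q with
  | _, O => 1
  | O, S _ => 0
  | S k', S q' => binomR k' q' + binomR k' (S q')
  end.

Lemma binomR_gt k q : (k < q)%nat -> binomR k q = 0.
Proof.
  revert q; induction k as [|k IH]; intros [|q] H; simpl; try lia; [reflexivity|].
  rewrite !IH by lia. ring.
Qed.

Lemma binomR_diag k : binomR k k = 1.
Proof. induction k as [|k IH]; simpl; [reflexivity|]. rewrite IH, binomR_gt by lia. ring. Qed.

Lemma binomR_fact k q : (q <= k)%nat -> binomR k q * INR (fact q) * INR (fact (k - q)) = INR (fact k).
Proof.
  revert q; induction k as [|k IH]; intros q Hq.
  - replace q with 0%nat by lia. simpl; ring.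
  - destruct q as [|q]; [rewrite Nat.sub_0_r; simpl binomR; simpl (fact 0); simpl INR at 1; ring|].
    simpl binomR. replace (S k - S q)%nat with (k - q)%nat by lia.
    destruct (Nat.eq_dec q k) as [->|Hne].
    + rewrite (binomR_gt k (S k)), Nat.sub_diag, binomR_diag by lia. simpl (INR (fact 0)). ring.
    + pose proof (IH q ltac:(lia)) as E1. pose proof (IH (S q) ltac:(lia)) as E2.
      replace (k - q)%nat with (S (k - S q)) in * by lia.
      rewrite !fact_simpl, !mult_INR in *.
      replace (INR (S (k - S q))) with (INR k - INR q) in *
        by (rewrite S_INR, minus_INR by lia; rewrite S_INR; ring).
      rewrite !S_INR in *.
      transitivity ((INR q + 1) * (binomR k q * INR (fact q) * ((INR k - INR q) * INR (fact (k - S q))))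
        + (INR k - INR q) * (binomR k (S q) * ((INR q + 1) * INR (fact q)) * INR (fact (k - S q)))); [ring|].
      rewrite E1, E2. ring.
Qed.

Lemma binomR_pascal_sum k d (Y : nat -> R) :
  sumR (S k) (fun q => binomR k q * d ^ q * Y (S (k - q))%nat)
  + d * sumR (S k) (fun q => binomR k q * d ^ q * Y (k - q)%nat)
  = sumR (S (S k)) (fun q => binomR (S k) q * d ^ q * Y (S k - q)%nat).
Proof.
  set (tail := sumR k (fun q => binomR k (S q) * d ^ S q * Y (k - q)%nat)).
  assert (Hl : sumR (S k) (fun q => binomR k q * d ^ q * Y (S (k - q))%nat) = Y (S k) + tail).
  { rewrite sumR_shift, Nat.sub_0_r. unfold tail. f_equal; [destruct k; simpl; ring|].
    apply sumR_ext; intros q Hq. do 2 f_equal. lia. }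
  assert (Hr : sumR (S (S k)) (fun q => binomR (S k) q * d ^ q * Y (S k - q)%nat)
               = Y (S k) + d * sumR (S k) (fun q => binomR k q * d ^ q * Y (k - q)%nat) + tail).
  { rewrite sumR_shift. cbn [binomR]. rewrite Nat.sub_0_r.
    rewrite (sumR_ext (S k) _ (fun q => d * (binomR k q * d ^ q * Y (k - q)%nat)
                                       + binomR k (S q) * d ^ S q * Y (k - q)%nat))
      by (intros; simpl; ring).
    rewrite sumR_plus, sumR_scal. cbn [sumR]. rewrite (binomR_gt k (S k)) by lia.
    unfold tail. simpl; ring. }
  rewrite Hl, Hr; ring.
Qed.

Lemma mat_pow_add_scalar n X d k i j : (i < n)%nat ->
  mat_pow n (fun a b => X a b + d * mat_id a b) k i j
  = sumR (S k) (fun q => binomR k q * d ^ q * mat_pow n X (k - q) i j).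
Proof.
  revert i; induction k as [|k IH]; intros i Hi; [simpl; ring|].
  etransitivity; [|apply (binomR_pascal_sum k d (fun m => mat_pow n X m i j))]. cbv beta.
  set (Z := fun a b => X a b + d * mat_id a b).
  cbn [mat_pow]. unfold mat_mul at 1.
  rewrite (sumR_ext n _ (fun l => X i l * mat_pow n Z k l j + d * (mat_id i l * mat_pow n Z k l j)))
    by (intros; unfold Z; ring).
  rewrite sumR_plus, sumR_scal, (sumR_mat_id_l n i _ Hi), IH by exact Hi. f_equal.
  rewrite (sumR_ext n _ (fun l =>
             sumR (S k) (fun q => binomR k q * d ^ q * (X i l * mat_pow n X (k - q) l j))))
    by (intros l Hl; rewrite IH by exact Hl; rewrite <- sumR_scal; apply sumR_ext; intros; ring).
  rewrite sumR_swap. apply sumR_ext; intros q _. rewrite sumR_scal. reflexivity.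
Qed.

Lemma is_series_exp x : is_series (fun k => x ^ k / INR (fact k)) (exp x).
Proof.
  apply is_series_Reals. unfold exp. destruct (exist_exp x) as [l Hl]; simpl.
  intros eps Heps. destruct (Hl eps Heps) as [N HN]. exists N. intros m Hm.
  rewrite (sum_eq _ (fun k => / INR (fact k) * x ^ k)) by (intros; unfold Rdiv; ring). apply HN, Hm.
Qed.

Lemma ex_series_abs_exp x : ex_series (fun m => Rabs (x ^ m / INR (fact m))).
Proof.
  exists (exp (Rabs x)). apply (is_series_ext (fun m => Rabs x ^ m / INR (fact m))); [|apply is_series_exp].
  intros m. unfold Rdiv. rewrite Rabs_mult, <- RPow_abs, (Rabs_pos_eq (/ _)); [reflexivity|].
  left; apply Rinv_0_lt_compat, INR_fact_lt_0.
Qed.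

Lemma is_series_ge_term a l q : is_series a l -> (forall k, 0 <= a k) -> a q <= l.
Proof.
  intros Ha%is_series_Reals a_ge0. apply Rle_trans with (sum_f_R0 a q).
  - destruct q as [|q]; simpl; [lra|]. pose proof (cond_pos_sum a q a_ge0). lra.
  - apply sum_incr; assumption.
Qed.

Lemma is_series_sumR n (a : nat -> nat -> R) (l : nat -> R) :
  (forall j, (j < n)%nat -> is_series (a j) (l j)) ->
  is_series (fun k => sumR n (fun j => a j k)) (sumR n l).
Proof.
  induction n as [|n IH]; intros H; simpl.
  - apply is_series_Reals. intros eps Heps. exists 0%nat. intros m _.
    unfold R_dist. rewrite sum_cte, Rmult_0_l, Rminus_0_r, Rabs_R0. exact Heps.
  - apply (is_series_plus (fun k => sumR n (fun j => a j k)) (a n));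
      [apply IH; intros; apply H|apply H]; lia.
Qed.

Section ShiftedExponential.
Variables (n : nat) (X : mat) (d : R) (E : mat).
Hypothesis X_ge0 : forall i j, (i < n)%nat -> (j < n)%nat -> 0 <= X i j.
Hypothesis E_expm : is_expm n (fun i j => X i j + d * mat_id i j) E.

Lemma mat_pow_le_geometric q i j : (i < n)%nat -> (j < n)%nat ->
  mat_pow n X q i j <= (INR n * sumR n (fun a => sumR n (fun b => X a b))) ^ q.
Proof.
  set (total := sumR n (fun a => sumR n (fun b => X a b))).
  assert (X_le : forall a b, (a < n)%nat -> (b < n)%nat -> X a b <= total).
  { intros a b Ha Hb. apply Rle_trans with (sumR n (fun b => X a b)).
    - apply (sumR_ge_term n (fun b => X a b)); auto.
    - apply (sumR_ge_term n (fun a => sumR n (fun b => X a b))); auto.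
      intros; apply sumR_ge0; auto. }
  revert i j; induction q as [|q IH]; intros i j Hi Hj; simpl.
  - unfold mat_id; destruct Nat.eq_dec; lra.
  - unfold mat_mul. apply Rle_trans with (sumR n (fun _ => total * (INR n * total) ^ q)).
    + apply sumR_le; intros l Hl. apply Rmult_le_compat; auto. apply mat_pow_ge0; auto.
    + rewrite sumR_const. right; ring.
Qed.

Lemma expm_shift_cauchy_term k i j : (i < n)%nat ->
  mat_pow n (fun a b => X a b + d * mat_id a b) k i j / INR (fact k)
  = sum_f_R0 (fun q => d ^ q / INR (fact q) * (mat_pow n X (k - q) i j / INR (fact (k - q)))) k.
Proof.
  intros Hi. rewrite mat_pow_add_scalar, <- sumR_sum_f_R0 by exact Hi.
  unfold Rdiv. rewrite Rmult_comm, <- sumR_scal. apply sumR_ext; intros q Hq.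
  rewrite <- (binomR_fact k q) by lia.
  pose proof (INR_fact_neq_0 q); pose proof (INR_fact_neq_0 (k - q)).
  field. split; [assumption|]. split; [assumption|].
  intros E0. apply (INR_fact_neq_0 k). rewrite <- (binomR_fact k q), E0 by lia. ring.
Qed.

Lemma ex_series_abs_mat_pow i j : (i < n)%nat -> (j < n)%nat ->
  ex_series (fun m => Rabs (mat_pow n X m i j / INR (fact m))).
Proof.
  intros Hi Hj. set (b := INR n * sumR n (fun a => sumR n (fun b => X a b))).
  apply (@ex_series_le R_AbsRing R_CompleteNormedModule _ (fun m => b ^ m / INR (fact m))).
  - intros m. change (norm (Rabs (mat_pow n X m i j / INR (fact m))))
      with (Rabs (Rabs (mat_pow n X m i j / INR (fact m)))).
    assert (pos_inv_fact : 0 <= / INR (fact m)) by (left; apply Rinv_0_lt_compat, INR_fact_lt_0).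
    rewrite Rabs_Rabsolu, Rabs_pos_eq by (apply Rmult_le_pos; [apply mat_pow_ge0|]; auto).
    apply Rmult_le_compat_r; [exact pos_inv_fact|]. apply mat_pow_le_geometric; assumption.
  - exists (exp b). apply is_series_exp.
Qed.

Lemma expm_shift_ge i j q : (i < n)%nat -> (j < n)%nat ->
  exp d * (mat_pow n X q i j / INR (fact q)) <= E i j.
Proof.
  intros Hi Hj. set (Y := fun m => mat_pow n X m i j / INR (fact m)).
  assert (Y_ge0 : forall m, 0 <= Y m).
  { intros m. apply Rdiv_le_0_compat; [apply mat_pow_ge0; auto|apply INR_fact_lt_0]. }
  destruct (ex_series_abs_mat_pow i j Hi Hj) as [F HF_abs].
  assert (HF : is_series Y F).
  { apply (is_series_ext (fun m => Rabs (Y m))); [intros m; apply Rabs_pos_eq, Y_ge0|exact HF_abs]. }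
  pose proof (is_series_mult _ _ _ _ (is_series_exp d) HF (ex_series_abs_exp d) (ex_intro _ F HF_abs))
    as Hprod%is_series_Reals.
  assert (E_eq : E i j = exp d * F).
  { apply (uniqueness_sum (fun k => mat_pow n (fun a b => X a b + d * mat_id a b) k i j / INR (fact k))).
    - apply E_expm.
    - intros eps Heps. destruct (Hprod eps Heps) as [N HN]. exists N. intros m Hm.
      rewrite (sum_eq _ (fun k => sum_f_R0 (fun q => d ^ q / INR (fact q) * Y (k - q)%nat) k))
        by (intros k _; apply expm_shift_cauchy_term, Hi).
      apply HN, Hm. }
  rewrite E_eq. apply Rmult_le_compat_l; [left; apply exp_pos|].
  apply (is_series_ge_term Y); assumption.
Qed.

End ShiftedExponential.

Lemma expm_row_sum n M E : (forall i, (i < n)%nat -> sumR n (fun j => M i j) = 0) ->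
  is_expm n M E -> forall i, (i < n)%nat -> sumR n (fun j => E i j) = 1.
Proof.
  intros M_sum E_expm i Hi.
  apply (uniqueness_sum (fun k => 0 ^ k / INR (fact k))); apply is_series_Reals.
  - apply (is_series_ext (fun k => sumR n (fun j => mat_pow n M k i j / INR (fact k)))).
    + intros k. unfold Rdiv.
      rewrite (sumR_ext n _ (fun j => / INR (fact k) * mat_pow n M k i j)) by (intros; ring).
      rewrite sumR_scal. change (sumR n (mat_pow n M k i)) with (sumR n (fun j => mat_pow n M k i j)).
      rewrite (mat_pow_row_sum n M 0 k M_sum i Hi). apply Rmult_comm.
    + apply (is_series_sumR n (fun j k => mat_pow n M k i j / INR (fact k))).
      intros j Hj. apply is_series_Reals, E_expm.
  - rewrite <- exp_0. apply is_series_exp.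
Qed.

Lemma is_expm_ext n M M' E : (forall i j, M i j = M' i j) -> is_expm n M E -> is_expm n M' E.
Proof.
  intros HM HE i j. apply is_series_Reals.
  apply (is_series_ext (fun k => mat_pow n M k i j / INR (fact k))).
  - intros k. rewrite (mat_pow_ext n M M' k HM). reflexivity.
  - apply is_series_Reals, HE.
Qed.

(** * Laplacian dynamics of the mode graphs *)

Definition euler_matrix (n : nat) (h : R) (B : mat) : mat :=
  mat_sub mat_id (mat_scale h (laplacian n B)).

Section LaplacianDynamics.
Variables (n : nat) (B : mat).
Hypothesis B_ge0 : forall i j, (i < n)%nat -> (j < n)%nat -> 0 <= B i j.
Hypothesis B_diag : forall i, (i < n)%nat -> B i i = 0.

Lemma euler_matrix_diag h i : (i < n)%nat -> euler_matrix n h B i i = 1 - h * degree n B i.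
Proof.
  intros Hi. unfold euler_matrix, mat_sub, mat_scale, mat_id.
  rewrite laplacian_diag by auto. destruct Nat.eq_dec; [ring|congruence].
Qed.

Lemma euler_matrix_offdiag h i j : i <> j -> euler_matrix n h B i j = h * B i j.
Proof.
  intros Hij. unfold euler_matrix, mat_sub, mat_scale, mat_id.
  rewrite laplacian_offdiag by exact Hij. destruct Nat.eq_dec; [congruence|ring].
Qed.

Lemma euler_matrix_row_stochastic h : 0 <= h -> (forall i, (i < n)%nat -> h * degree n B i <= 1) ->
  row_stochastic n (euler_matrix n h B).
Proof.
  intros h_ge0 h_deg. split.
  - intros i j Hi Hj. destruct (Nat.eq_dec i j) as [<-|Hij].
    + rewrite euler_matrix_diag by exact Hi. specialize (h_deg i Hi). lra.
    + rewrite euler_matrix_offdiag by exact Hij. apply Rmult_le_pos; auto.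
  - intros i Hi. unfold euler_matrix, mat_sub, mat_scale.
    rewrite sumR_minus, sumR_scal, laplacian_row_sum by auto.
    rewrite <- (sumR_mat_id_l n i (fun _ => 1) Hi). rewrite Rmult_0_r, Rminus_0_r.
    apply sumR_ext; intros; ring.
Qed.

Variables (t c : R) (E : mat).
Hypothesis t_ge0 : 0 <= t.
Hypothesis degree_le : forall i, (i < n)%nat -> degree n B i <= c.
Hypothesis E_expm : is_expm n (mat_scale (- t) (laplacian n B)) E.

(* [-t L = X - c t I] with [X = t (c I - L)] entrywise nonnegative. *)
Let X : mat := fun i j => t * (c * mat_id i j - laplacian n B i j).

Let X_ge0 i j : (i < n)%nat -> (j < n)%nat -> 0 <= X i j.
Proof.
  intros Hi Hj. apply Rmult_le_pos; [exact t_ge0|]. unfold mat_id.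
  destruct (Nat.eq_dec i j) as [<-|Hij].
  - rewrite laplacian_diag by auto. specialize (degree_le i Hi). lra.
  - rewrite laplacian_offdiag by exact Hij. specialize (B_ge0 i j Hi Hj). lra.
Qed.

Let E_shift : is_expm n (fun i j => X i j + - (c * t) * mat_id i j) E.
Proof.
  apply (is_expm_ext n (mat_scale (- t) (laplacian n B))); [|exact E_expm].
  intros; unfold X, mat_scale; ring.
Qed.

Lemma expm_laplacian_row_stochastic : row_stochastic n E.
Proof.
  split.
  - intros i j Hi Hj. eapply Rle_trans; [|apply (expm_shift_ge n X _ E X_ge0 E_shift i j 0 Hi Hj)].
    apply Rmult_le_pos; [left; apply exp_pos|]. simpl. unfold mat_id. destruct Nat.eq_dec; lra.
  - apply (expm_row_sum n (mat_scale (- t) (laplacian n B)) E); [|exact E_expm].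
    intros i Hi. unfold mat_scale. rewrite sumR_scal, laplacian_row_sum by auto. ring.
Qed.

Lemma expm_laplacian_diag i : (i < n)%nat -> exp (- (c * t)) <= E i i.
Proof.
  intros Hi. eapply Rle_trans; [|apply (expm_shift_ge n X _ E X_ge0 E_shift i i 0 Hi Hi)].
  simpl. unfold mat_id. destruct Nat.eq_dec; [|congruence]. lra.
Qed.

Lemma expm_laplacian_offdiag i j : (i < n)%nat -> (j < n)%nat -> i <> j ->
  exp (- (c * t)) * (t * B i j) <= E i j.
Proof.
  intros Hi Hj Hij. eapply Rle_trans; [|apply (expm_shift_ge n X _ E X_ge0 E_shift i j 1 Hi Hj)].
  cbn [mat_pow fact]. rewrite mat_mul_id_r by exact Hj. unfold X, mat_id.
  rewrite laplacian_offdiag by exact Hij. destruct Nat.eq_dec; [congruence|]. simpl; right; field.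
Qed.

End LaplacianDynamics.

(* In Stdlib [1 / 0 = 0], so [h < 1 / d] with [h > 0] already forces [d > 0]. *)
Lemma mult_lt_1_of_lt_div h d : 0 < h -> h < 1 / d -> h * d < 1.
Proof.
  intros h_pos Hhd. destruct (Rlt_le_dec 0 d) as [d_pos|d_le0].
  - apply (Rmult_lt_compat_r d) in Hhd; [|exact d_pos].
    unfold Rdiv in Hhd. rewrite Rmult_assoc, Rinv_l, Rmult_1_l in Hhd by lra. exact Hhd.
  - destruct (Rle_lt_or_eq_dec d 0 d_le0) as [d_neg| ->].
    + unfold Rdiv in Hhd. rewrite Rmult_1_l in Hhd. pose proof (Rinv_lt_0_compat d d_neg). lra.
    + rewrite Rmult_0_r; lra.
Qed.

Section ModeGraphs.
Variables (sc : scenario) (n : nat) (A : mat).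
Hypothesis A_simple : simple_adj n A.

Lemma adj_mode_entry s i j : adj_mode sc A s i j = 0 \/ adj_mode sc A s i j = A i j.
Proof. destruct sc, s; unfold adj_mode, zero_row, zero_col; repeat destruct Nat.eq_dec; auto. Qed.

Lemma adj_mode_bounds s i j : (i < n)%nat -> (j < n)%nat -> 0 <= adj_mode sc A s i j <= A i j.
Proof.
  intros Hi Hj. destruct A_simple as [A01 _].
  destruct (A01 i j Hi Hj) as [HA|HA], (adj_mode_entry s i j) as [HB|HB]; rewrite HB; lra.
Qed.

Lemma adj_mode_diag s i : (i < n)%nat -> adj_mode sc A s i i = 0.
Proof.
  intros Hi. destruct A_simple as (_ & _ & A_diag).
  destruct (adj_mode_entry s i i) as [->| ->]; auto.
Qed.

Lemma degree_adj_mode_le s i : (i < n)%nat -> degree n (adj_mode sc A s) i <= dmax n A.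
Proof.
  intros Hi. apply Rle_trans with (degree n A i); [|apply vmax_ge; lia].
  apply sumR_le; intros k Hk. apply adj_mode_bounds; auto.
Qed.

Lemma edge_simple_adj i l : edge n A l i -> i <> l /\ A i l = 1.
Proof.
  intros (Hi & Hl & Hpos). destruct A_simple as (A01 & _ & A_diag). split.
  - intros <-. rewrite A_diag in Hpos by exact Hi. lra.
  - destruct (A01 i l Hi Hl) as [HA|HA]; [rewrite HA in Hpos; lra|exact HA].
Qed.

Hypothesis n_pos : (0 < n)%nat.
Hypothesis A_conn : connected n A.
Variable p : mode -> R.
Hypothesis p_ge0 : forall s, 0 <= p s.
Hypothesis p_sum : p M1 + p M2 + p M3 + p M4 = 1.
Hypothesis p_full : 0 < p M4.

Lemma euler_consensus_almost_surely h kbar x0 : (1 <= kbar)%nat -> 0 < h -> h * dmax n A < 1 ->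
  almost_surely p (consensus n (fun s => mat_pow n (euler_matrix n h (adj_mode sc A s)) kbar) x0).
Proof.
  intros kbar_pos h_pos h_dmax.
  set (delta := Rmin (1 - h * dmax n A) h).
  assert (delta_pos : 0 < delta) by (apply Rmin_glb_lt; lra).
  assert (h_deg : forall s i, (i < n)%nat -> h * degree n (adj_mode sc A s) i <= h * dmax n A).
  { intros s i Hi. apply Rmult_le_compat_l; [lra|apply degree_adj_mode_le, Hi]. }
  assert (P_stoch : forall s, row_stochastic n (euler_matrix n h (adj_mode sc A s))).
  { intros s. apply euler_matrix_row_stochastic; [apply adj_mode_bounds|apply adj_mode_diag|lra|].
    intros i Hi. pose proof (h_deg s i Hi); lra. }
  assert (P_diag : forall i, (i < n)%nat -> delta <= euler_matrix n h A i i).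
  { intros i Hi. rewrite euler_matrix_diag by (auto; apply (adj_mode_diag M4)).
    pose proof (h_deg M4 i Hi) as Hdeg. simpl adj_mode in Hdeg.
    pose proof (Rmin_l (1 - h * dmax n A) h). unfold delta; lra. }
  assert (P_edge : forall i l, edge n A l i -> delta <= euler_matrix n h A i l).
  { intros i l Hedge. destruct (edge_simple_adj i l Hedge) as [Hil HA].
    rewrite euler_matrix_offdiag, HA by exact Hil. rewrite Rmult_1_r. apply Rmin_r. }
  apply (consensus_almost_surely n A _ p M4 (delta ^ kbar)); auto.
  - intros s. apply row_stochastic_mat_pow, P_stoch.
  - apply pow_lt, delta_pos.
  - intros i Hi. apply (mat_pow_ge_reach_within n A); auto; [apply (P_stoch M4)|lra|].
    apply (reach_within_le _ 0); [lia|reflexivity].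
  - intros i l Hedge. destruct Hedge as (Hi & Hl & HA).
    apply (mat_pow_ge_reach_within n A); auto; [apply (P_stoch M4)|lra|].
    apply (reach_within_le _ 1); [lia|]. right. exists l. split; [reflexivity|repeat split; auto].
Qed.

Lemma expm_consensus_almost_surely t (Ex : mode -> mat) x0 : 0 < t ->
  (forall s, is_expm n (mat_scale (- t) (laplacian n (adj_mode sc A s))) (Ex s)) ->
  almost_surely p (consensus n Ex x0).
Proof.
  intros t_pos HEx.
  assert (B_ge0 : forall s i j, (i < n)%nat -> (j < n)%nat -> 0 <= adj_mode sc A s i j)
    by (intros; apply adj_mode_bounds; auto).
  pose proof (fun s => expm_laplacian_row_stochastic n _ (B_ge0 s) (adj_mode_diag s) t (dmax n A)
                         (Ex s) (Rlt_le _ _ t_pos) (degree_adj_mode_le s) (HEx s)) as E_stoch.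
  pose proof (expm_laplacian_diag n _ (B_ge0 M4) (adj_mode_diag M4) t (dmax n A)
                (Ex M4) (Rlt_le _ _ t_pos) (degree_adj_mode_le M4) (HEx M4)) as E_diag.
  pose proof (expm_laplacian_offdiag n _ (B_ge0 M4) (adj_mode_diag M4) t (dmax n A)
                (Ex M4) (Rlt_le _ _ t_pos) (degree_adj_mode_le M4) (HEx M4)) as E_offdiag.
  pose proof (exp_pos (- (dmax n A * t))). pose proof (Rmin_l 1 t). pose proof (Rmin_r 1 t).
  apply (consensus_almost_surely n A Ex p M4 (exp (- (dmax n A * t)) * Rmin 1 t)); auto.
  - apply Rmult_lt_0_compat; [assumption|apply Rmin_glb_lt; lra].
  - intros i Hi. eapply Rle_trans; [|apply E_diag, Hi].
    rewrite <- (Rmult_1_r (exp _)) at 2. apply Rmult_le_compat_l; lra.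
  - intros i l Hedge. destruct (edge_simple_adj i l Hedge) as [Hil HA].
    eapply Rle_trans; [|apply E_offdiag; [apply Hedge|apply Hedge|exact Hil]].
    simpl adj_mode. rewrite HA, Rmult_1_r. apply Rmult_le_compat_l; lra.
Qed.

End ModeGraphs.

Theorem theorem3 :
  forall (sc : scenario) (n : nat) (A : mat) (h : R) (kbar : nat)
         (alpha beta gamma theta : R),
    (3 <= n)%nat ->
    simple_adj n A ->
    connected n A ->
    0 < alpha < 1 -> 0 < beta < 1 -> 0 < gamma < 1 -> 0 < theta < 1 ->
    alpha + beta + gamma + theta = 1 ->
    (1 <= kbar)%nat ->
    0 < h -> h < 1 / dmax n A ->
    strongly_connected n (expected_adj sc A alpha beta gamma theta) ->
    (forall x0 : vec,
       almost_surely (prob alpha beta gamma theta)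
         (consensus n
            (fun s => mat_pow n (mat_sub mat_id (mat_scale h (lap_mode sc n A s))) kbar)
            x0)) /\
    (forall Ex : mode -> mat,
       (forall s, is_expm n (mat_scale (- (INR kbar * h)) (lap_mode sc n A s)) (Ex s)) ->
       forall x0 : vec,
         almost_surely (prob alpha beta gamma theta) (consensus n Ex x0)).
Proof.
  intros sc n A h kbar alpha beta gamma theta n_ge3 A_simple A_conn
    Halpha Hbeta Hgamma Htheta p_sum kbar_pos h_pos h_lt _.
  assert (n_pos : (0 < n)%nat) by lia.
  assert (p_ge0 : forall s, 0 <= prob alpha beta gamma theta s) by (intros []; simpl; lra).
  assert (t_pos : 0 < INR kbar * h) by (apply Rmult_lt_0_compat; [apply lt_0_INR; lia|exact h_pos]).
  split.
  - intros x0. apply (euler_consensus_almost_surely sc n A); simpl; try lra; auto.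
    apply mult_lt_1_of_lt_div; assumption.
  - intros Ex HEx x0.
    apply (expm_consensus_almost_surely sc n A) with (t := INR kbar * h); simpl; try lra; auto.
Qed.
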